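(* For every $\theta\in\mathcal{P}$ there exists $\beta\in\mathcal{KL}$ such that the following holds. Let $t_0\ge0$, $\tau\in(0,\infty]$, let $\omega:[t_0,t_0+\tau)\to\mathbb{R}_+$ be continuous, and let $\eta:[t_0,t_0+\tau)\to\mathbb{R}_+$ be right-continuous and piecewise continuous. If $$D^{+}\omega(t)\le -\theta(\omega(t))+\eta(t)\quad\text{for all } t\in[t_0,t_0+\tau),$$ then $$\omega(t)\le \beta(\omega(t_0),t-t_0)+2\int_{t_0}^{t}\eta(s)\,ds\quad\text{for all } t\in[t_0,t_0+\tau).$$
   Context: $D^+$ denotes the right upper Dini derivative: $D^+\omega(t)=\limsup_{h\to0^+}\frac{\omega(t+h)-\omega(t)}{h}$. Comparison functions: $\mathcal{P}$ is the set of continuous $\gamma:\mathbb{R}_+\to\mathbb{R}_+$ with $\gamma(0)=0$ and $\gamma(r)>0$ for $r>0$. $\mathcal{K}$ is the set of strictly increasing $\gamma\in\mathcal{P}$. $\mathcal{L}$ is the set of continuous, strictly decreasing $\gamma:\mathbb{R}_+\to\mathbb{R}_+$ with limit $0$ at $\infty$. $\mathcal{KL}$ is the set of continuous $\beta:\mathbb{R}_+^2\to\mathbb{R}_+$ such that $\beta(\cdot,t)\in\mathcal{K}$ for all $t\ge0$ and $\beta(r,\cdot)\in\mathcal{L}$ for all $r>0$. *)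

From Stdlib Require Import Reals Lra.
From Coquelicot Require Import Coquelicot.
Open Scope R_scope.

Definition cont_on_Rplus (g : R -> R) : Prop :=
  forall r, 0 <= r -> forall eps, 0 < eps -> exists delta, 0 < delta /\
    forall s, 0 <= s -> Rabs (s - r) < delta -> Rabs (g s - g r) < eps.

Definition classP (g : R -> R) : Prop :=
  cont_on_Rplus g /\ g 0 = 0 /\ (forall r, 0 < r -> 0 < g r).

Definition classK (g : R -> R) : Prop :=
  classP g /\ (forall r s, 0 <= r -> r < s -> g r < g s).

Definition classL (g : R -> R) : Prop :=
  cont_on_Rplus g /\ (forall r, 0 <= r -> 0 <= g r) /\
  (forall r s, 0 <= r -> r < s -> g s < g r) /\
  filterlim g (Rbar_locally p_infty) (locally 0).

Definition classKL (b : R -> R -> R) : Prop :=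
  (forall r t, 0 <= r -> 0 <= t -> forall eps, 0 < eps -> exists delta, 0 < delta /\
     forall r' t', 0 <= r' -> 0 <= t' -> Rabs (r' - r) < delta -> Rabs (t' - t) < delta ->
       Rabs (b r' t' - b r t) < eps) /\
  (forall t, 0 <= t -> classK (fun r => b r t)) /\
  (forall r, 0 < r -> classL (fun t => b r t)).

(* Right upper Dini derivative, as an extended real:
   D^+ w(t) = limsup_{h->0+} (w(t+h)-w(t))/h = inf_{d>0} sup_{0<h<d} (...). *)
Definition dini_upper (w : R -> R) (t : R) : Rbar :=
  Rbar_glb (fun y => exists d, 0 < d /\
    y = Rbar_lub (fun z => exists h, 0 < h < d /\ z = Finite ((w (t + h) - w t) / h))).

Definition in_dom (t0 : R) (tau : Rbar) (t : R) : Prop :=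
  t0 <= t /\ Rbar_lt (Finite t) (Rbar_plus (Finite t0) tau).

Definition cont_on_dom (t0 : R) (tau : Rbar) (w : R -> R) : Prop :=
  forall t, in_dom t0 tau t -> forall eps, 0 < eps -> exists delta, 0 < delta /\
    forall s, in_dom t0 tau s -> Rabs (s - t) < delta -> Rabs (w s - w t) < eps.

Definition right_cont_on_dom (t0 : R) (tau : Rbar) (e : R -> R) : Prop :=
  forall t, in_dom t0 tau t -> filterlim e (at_right t) (locally (e t)).

Definition piecewise_cont_on_dom (t0 : R) (tau : Rbar) (e : R -> R) : Prop :=
  forall b, in_dom t0 tau b -> exists (n : nat) (p : nat -> R),
    p 0%nat = t0 /\ p n = b /\
    (forall i, (i < n)%nat -> p i < p (S i)) /\
    (forall i, (i < n)%nat ->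
       (forall s, p i < s < p (S i) -> continuous e s) /\
       (exists l, filterlim e (at_right (p i)) (locally l)) /\
       (exists l, filterlim e (at_left (p (S i))) (locally l))).

From Stdlib Require Import Reals Lra Lia Classical ClassicalEpsilon.
From Coquelicot Require Import Coquelicot.
Open Scope R_scope.

(* Let [rho s := min (s, min_[s, 2 s] theta)]: it is continuous and positive,
   with [rho s <= s] and [rho s <= theta] on [[s, 2 s]].  Then
   [G s := int_s^1 dz / rho z] is a decreasing bijection from [(0, +oo)] onto
   [R], and [beta r t := G^-1 (G r + t)], the flow of [v' = - rho v], is of
   class KL.
   With [I t := int_t0^t eta] and [u := omega - I], the hypothesis gives
   [D^+ u <= - theta omega].  If [omega s <= 2 I s] for some [s] in [[t0, t]],
   then [u] is nonincreasing on [[s, t]] and [omega t <= 2 I t].  Otherwise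
   [u <= omega <= 2 u] on [[t0, t]], so [D^+ u <= - rho u], and comparison
   with the flow gives [u t <= beta (omega t0) (t - t0)]. *)

Lemma continuity_pt_eps (f : R -> R) (x : R) :
  continuity_pt f x <->
  (forall eps, 0 < eps -> exists d, 0 < d /\
     forall y, Rabs (y - x) < d -> Rabs (f y - f x) < eps).
Proof.
  split; intros H eps Heps; destruct (H eps Heps) as [d [Hd Hclose]];
    exists d; split; auto.
  - intros y Hy. destruct (Req_dec y x) as [->|Hne].
    + rewrite Rminus_diag, Rabs_R0. exact Heps.
    + apply Hclose. split; [split; [exact I|auto]|exact Hy].
  - intros y [_ Hy]. apply Hclose. exact Hy.
Qed.

Lemma ball_R (x y eps : R) : ball x eps y <-> Rabs (y - x) < eps.
Proof. reflexivity. Qed.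

Lemma filterlim_at_right_eps (f : R -> R) (x l : R) :
  filterlim f (at_right x) (locally l) ->
  forall eps, 0 < eps -> exists d, 0 < d /\
    forall y, x < y < x + d -> Rabs (f y - l) < eps.
Proof.
  intros H eps Heps.
  destruct (proj1 (filterlim_locally f l) H (mkposreal eps Heps)) as [d Hd].
  exists d. split; [apply cond_pos|]. intros y Hy.
  apply Hd; [apply ball_R, Rabs_def1|]; lra.
Qed.

Lemma filterlim_at_left_eps (f : R -> R) (x l : R) :
  filterlim f (at_left x) (locally l) ->
  forall eps, 0 < eps -> exists d, 0 < d /\
    forall y, x - d < y < x -> Rabs (f y - l) < eps.
Proof.
  intros H eps Heps.
  destruct (proj1 (filterlim_locally f l) H (mkposreal eps Heps)) as [d Hd].
  exists d. split; [apply cond_pos|]. intros y Hy.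
  apply Hd; [apply ball_R, Rabs_def1|]; lra.
Qed.

(** * Monotonicity from upper right slopes *)

Definition continuous_on_segment (f : R -> R) (a b : R) : Prop :=
  forall x, a <= x <= b -> forall eps, 0 < eps -> exists d, 0 < d /\
    forall y, a <= y <= b -> Rabs (y - x) < d -> Rabs (f y - f x) < eps.

(* The upper right Dini derivative of [f] at [x], with increments staying
   in [(-oo, b]], is at most [c]. *)
Definition right_slope_le (f : R -> R) (b x c : R) : Prop :=
  forall e, 0 < e -> exists d, 0 < d /\
    forall h, 0 < h < d -> x + h <= b -> f (x + h) - f x <= (c + e) * h.

Lemma right_slope_le_weaken f b x c c' :
  c <= c' -> right_slope_le f b x c -> right_slope_le f b x c'.
Proof.
  intros Hc Hf e He. destruct (Hf e He) as [d [Hd Hslope]].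
  exists d. split; [exact Hd|]. intros h Hh Hxh.
  specialize (Hslope h Hh Hxh). nra.
Qed.

Lemma right_slope_le_plus f g b x c c' :
  right_slope_le f b x c -> right_slope_le g b x c' ->
  right_slope_le (fun y => f y + g y) b x (c + c').
Proof.
  intros Hf Hg e He.
  destruct (Hf (e / 2) ltac:(lra)) as [d1 [Hd1 Hf1]].
  destruct (Hg (e / 2) ltac:(lra)) as [d2 [Hd2 Hg2]].
  exists (Rmin d1 d2). split; [now apply Rmin_glb_lt|].
  intros h Hh Hxh. pose proof (Rmin_l d1 d2). pose proof (Rmin_r d1 d2).
  specialize (Hf1 h ltac:(lra) Hxh). specialize (Hg2 h ltac:(lra) Hxh). lra.
Qed.

Lemma dini_upper_right_slope_le w b t c :
  Rbar_le (dini_upper w t) (Finite c) -> right_slope_le w b t c.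
Proof.
  intros Hw e He. unfold dini_upper, Rbar_glb in Hw.
  destruct (Rbar_ex_glb _) as [l [Hlb Hglb]]; simpl in Hw.
  assert (Hsup : exists d, 0 < d /\
    Rbar_lt (Rbar_lub (fun z => exists h, 0 < h < d /\
                         z = Finite ((w (t + h) - w t) / h))) (Finite (c + e))).
  { apply NNPP; intro Hn.
    assert (Hl : Rbar_le (Finite (c + e)) l).
    { apply Hglb. intros y [d [Hd Hy]]. rewrite Hy. apply Rbar_not_lt_le. intro Hlt.
      apply Hn. exists d. auto. }
    destruct l as [l| |]; simpl in *; lra. }
  destruct Hsup as [d [Hd Hlt]]. exists d. split; [exact Hd|]. intros h Hh _.
  unfold Rbar_lub in Hlt. destruct (Rbar_ex_lub _) as [m [Hub Hlub]]; simpl in Hlt.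
  assert (Hq : Rbar_lt (Finite ((w (t + h) - w t) / h)) (Finite (c + e))).
  { eapply Rbar_le_lt_trans; [apply Hub; exists h; auto|exact Hlt]. }
  simpl in Hq. apply Rmult_lt_compat_r with (r := h) in Hq; [|lra].
  unfold Rdiv in Hq. rewrite Rmult_assoc, Rinv_l, Rmult_1_r in Hq; lra.
Qed.

(* Continuity at the supremum of the set where [f z <= f a + 2 e (z - a)]
   holds on [[a, z]] keeps the bound there, and the slope hypothesis pushes
   the bound past any supremum below [b]. *)
Lemma right_slope_le_0_growth f a b e :
  a <= b -> 0 < e -> continuous_on_segment f a b ->
  (forall x, a <= x < b -> right_slope_le f b x 0) ->
  f b <= f a + 2 * e * (b - a).
Proof.
  intros Hab He Hf Hslope.
  set (bound_upto y := a <= y <= b /\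
         forall z, a <= z <= y -> f z <= f a + 2 * e * (z - a)).
  assert (Ha : bound_upto a).
  { split; [lra|]. intros z Hz. replace z with a by lra. lra. }
  destruct (completeness bound_upto) as [c [Hub Hlub]];
    [exists b; intros y [Hy _]; lra|exists a; exact Ha|].
  assert (Hac : a <= c) by (apply Hub, Ha).
  assert (Hcb : c <= b) by (apply Hlub; intros y [Hy _]; lra).
  assert (Happrox : forall d, 0 < d -> exists y, bound_upto y /\ c - d < y).
  { intros d Hd. apply NNPP; intro Hn.
    assert (c <= c - d); [|lra].
    apply Hlub. intros y Hy. apply Rnot_lt_le. intro. apply Hn. exists y. split; auto; lra. }
  assert (Hc : forall z, a <= z <= c -> f z <= f a + 2 * e * (z - a)).
  { intros z Hz. destruct (Rlt_or_le z c) as [Hzc|Hzc].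
    - destruct (Happrox (c - z)) as [y [[_ Hy] Hzy]]; [lra|]. apply Hy. lra.
    - replace z with c by lra. apply Rnot_lt_le; intro Hgap.
      destruct (Hf c (conj Hac Hcb) ((f c - f a - 2 * e * (c - a)) / 2))
        as [d [Hd Hclose]]; [lra|].
      destruct (Happrox d Hd) as [y [[Hy Hbound] Hcy]].
      assert (y <= c) by (apply Hub; split; auto).
      specialize (Hbound y ltac:(lra)).
      specialize (Hclose y Hy ltac:(apply Rabs_def1; lra)).
      apply Rabs_def2 in Hclose. nra. }
  destruct (Rlt_or_le c b) as [Hcb'|Hcb']; [|apply Hc; lra].
  exfalso. destruct (Hslope c (conj Hac Hcb') e He) as [d [Hd Hstep]].
  set (h := Rmin (d / 2) (b - c)).
  assert (Hh : 0 < h) by (apply Rmin_glb_lt; lra).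
  assert (h <= d / 2) by apply Rmin_l. assert (h <= b - c) by apply Rmin_r.
  assert (bound_upto (c + h)).
  { split; [lra|]. intros z Hz. destruct (Rle_or_lt z c); [apply Hc; lra|].
    specialize (Hstep (z - c) ltac:(lra) ltac:(lra)).
    replace (c + (z - c)) with z in Hstep by ring.
    specialize (Hc c ltac:(lra)). nra. }
  assert (c + h <= c) by (apply Hub; auto). lra.
Qed.

Lemma right_slope_le_0_nonincreasing f a b :
  a <= b -> continuous_on_segment f a b ->
  (forall x, a <= x < b -> right_slope_le f b x 0) -> f b <= f a.
Proof.
  intros Hab Hf Hslope. apply le_epsilon. intros eps Heps.
  pose proof (right_slope_le_0_growth f a b (eps / (2 * (b - a) + 1)) Hab
    ltac:(apply Rdiv_lt_0_compat; lra) Hf Hslope) as Hgrowth.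
  enough (2 * (eps / (2 * (b - a) + 1)) * (b - a) <= eps) by lra.
  apply Rmult_le_reg_r with (2 * (b - a) + 1); [lra|].
  field_simplify; lra.
Qed.

Lemma continuous_on_segment_minus f g a b :
  continuous_on_segment f a b -> continuous_on_segment g a b ->
  continuous_on_segment (fun x => f x - g x) a b.
Proof.
  intros Hf Hg x Hx eps Heps.
  destruct (Hf x Hx (eps / 2) ltac:(lra)) as [d1 [Hd1 Hf1]].
  destruct (Hg x Hx (eps / 2) ltac:(lra)) as [d2 [Hd2 Hg2]].
  exists (Rmin d1 d2). split; [now apply Rmin_glb_lt|].
  intros y Hy Hyx. pose proof (Rmin_l d1 d2). pose proof (Rmin_r d1 d2).
  specialize (Hf1 y Hy ltac:(lra)). specialize (Hg2 y Hy ltac:(lra)).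
  apply Rabs_def2 in Hf1. apply Rabs_def2 in Hg2. apply Rabs_def1; lra.
Qed.

Lemma continuous_on_segment_comp g f a b :
  continuous_on_segment f a b ->
  (forall x, a <= x <= b -> continuity_pt g (f x)) ->
  continuous_on_segment (fun x => g (f x)) a b.
Proof.
  intros Hf Hg x Hx eps Heps.
  destruct (proj1 (continuity_pt_eps g (f x)) (Hg x Hx) eps Heps) as [d1 [Hd1 Hg1]].
  destruct (Hf x Hx d1 Hd1) as [d [Hd Hf1]].
  exists d. split; [exact Hd|]. intros y Hy Hyx. apply Hg1, Hf1; assumption.
Qed.

Lemma continuous_on_segment_lipschitz f a b M :
  0 <= M ->
  (forall x y, a <= x <= b -> a <= y <= b -> Rabs (f y - f x) <= M * Rabs (y - x)) ->
  continuous_on_segment f a b.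
Proof.
  intros HM Hlip x Hx eps Heps.
  exists (eps / (M + 1)). split; [apply Rdiv_lt_0_compat; lra|].
  intros y Hy Hyx. eapply Rle_lt_trans; [now apply Hlip|].
  apply Rle_lt_trans with ((M + 1) * Rabs (y - x)).
  - apply Rmult_le_compat_r; [apply Rabs_pos|lra].
  - apply Rmult_lt_reg_r with (/ (M + 1)); [apply Rinv_0_lt_compat; lra|].
    replace ((M + 1) * Rabs (y - x) * / (M + 1)) with (Rabs (y - x)) by (field; lra).
    exact Hyx.
Qed.

Lemma continuous_on_segment_sub f a b a' b' :
  a <= a' -> b' <= b -> continuous_on_segment f a b -> continuous_on_segment f a' b'.
Proof.
  intros Ha Hb Hf x Hx eps Heps. destruct (Hf x ltac:(lra) eps Heps) as [d [Hd Hclose]].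
  exists d. split; [exact Hd|]. intros y Hy. apply Hclose. lra.
Qed.

(** * Integrals of piecewise continuous functions *)

Section Primitive.

Variables (eta : R -> R) (a b : R).
Hypothesis eta_int : ex_RInt eta a b.

Lemma ex_RInt_inside x y : a <= x -> x <= y -> y <= b -> ex_RInt eta x y.
Proof.
  intros Hax Hxy Hyb. apply (ex_RInt_Chasles_2 eta a x y); [lra|].
  apply (ex_RInt_Chasles_1 eta a y b); [lra|exact eta_int].
Qed.

Lemma RInt_increment x y :
  a <= x -> x <= y -> y <= b -> RInt eta a y - RInt eta a x = RInt eta x y.
Proof.
  intros Hax Hxy Hyb.
  rewrite <- (RInt_Chasles eta a x y); try (apply ex_RInt_inside; lra).
  unfold plus; simpl. ring.
Qed.

Lemma RInt_lipschitz : exists M, 0 <= M /\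
  forall x y, a <= x <= b -> a <= y <= b ->
    Rabs (RInt eta a y - RInt eta a x) <= M * Rabs (y - x).
Proof.
  destruct (ex_RInt_ub eta a b eta_int) as [M HM].
  exists (Rabs M). split; [apply Rabs_pos|].
  assert (Hbound : forall x y, a <= x -> x <= y -> y <= b ->
    Rabs (RInt eta a y - RInt eta a x) <= Rabs M * Rabs (y - x)).
  { intros x y Hax Hxy Hyb. rewrite RInt_increment, (Rabs_right (y - x)) by lra.
    rewrite Rmult_comm. apply abs_RInt_le_const; [lra|apply ex_RInt_inside; lra|].
    intros z Hz. eapply Rle_trans; [|apply Rle_abs].
    apply (HM z). rewrite Rmin_left, Rmax_right; lra. }
  intros x y Hx Hy. destruct (Rle_or_lt x y); [apply Hbound; lra|].
  rewrite Rabs_minus_sym, (Rabs_minus_sym y x). apply Hbound; lra.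
Qed.

Lemma RInt_continuous_on_segment : continuous_on_segment (RInt eta a) a b.
Proof.
  destruct RInt_lipschitz as [M [HM Hlip]].
  exact (continuous_on_segment_lipschitz _ a b M HM Hlip).
Qed.

Lemma RInt_nondecreasing x y :
  (forall z, a <= z <= b -> 0 <= eta z) ->
  a <= x -> x <= y -> y <= b -> RInt eta a x <= RInt eta a y.
Proof.
  intros Hpos Hax Hxy Hyb.
  enough (0 <= RInt eta x y) by (pose proof (RInt_increment x y Hax Hxy Hyb); lra).
  apply RInt_ge_0; [lra|apply ex_RInt_inside; lra|]. intros z Hz. apply Hpos. lra.
Qed.

Lemma RInt_nonneg x :
  (forall z, a <= z <= b -> 0 <= eta z) -> a <= x <= b -> 0 <= RInt eta a x.
Proof.
  intros Hpos Hx. apply RInt_ge_0; [lra|apply ex_RInt_inside; lra|].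
  intros z Hz. apply Hpos. lra.
Qed.

Lemma right_slope_le_opp_RInt x :
  a <= x < b -> filterlim eta (at_right x) (locally (eta x)) ->
  right_slope_le (fun y => - RInt eta a y) b x (- eta x).
Proof.
  intros Hx Hright e He.
  destruct (filterlim_at_right_eps eta x _ Hright e He) as [d [Hd Hclose]].
  exists d. split; [exact Hd|]. intros h Hh Hxh.
  enough ((eta x - e) * h <= RInt eta x (x + h)).
  { pose proof (RInt_increment x (x + h) ltac:(lra) ltac:(lra) Hxh). lra. }
  replace ((eta x - e) * h) with (RInt (fun _ => eta x - e) x (x + h))
    by (rewrite RInt_const; unfold scal; simpl; unfold mult; simpl; ring).
  apply RInt_le; [lra|apply ex_RInt_const|apply ex_RInt_inside; lra|].
  intros z Hz. specialize (Hclose z ltac:(lra)). apply Rabs_def2 in Hclose. lra.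
Qed.

End Primitive.

(* Extending [e] by its one-sided limits at [a] and [b] gives a function that
   is continuous on [[a, b]] and agrees with [e] on [(a, b)]. *)
Lemma ex_RInt_piece (e : R -> R) a b :
  a < b -> (forall s, a < s < b -> continuous e s) ->
  (exists l, filterlim e (at_right a) (locally l)) ->
  (exists l, filterlim e (at_left b) (locally l)) ->
  ex_RInt e a b.
Proof.
  intros Hab Hcont [la Hla] [lb Hlb].
  set (ext x := if Rle_dec x a then la else if Rle_dec b x then lb else e x).
  assert (Hext : forall x, a < x < b -> ext x = e x).
  { intros x Hx. unfold ext. destruct (Rle_dec x a); [lra|].
    destruct (Rle_dec b x); [lra|reflexivity]. }
  apply (ex_RInt_ext (V := R_NormedModule) ext).
  { rewrite Rmin_left, Rmax_right by lra. intros x Hx. apply Hext, Hx. }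
  apply (ex_RInt_continuous (V := R_CompleteNormedModule)).
  rewrite Rmin_left, Rmax_right by lra. intros z Hz.
  apply continuity_pt_filterlim, continuity_pt_eps. intros eps Heps.
  destruct (Req_dec z a) as [->|Hza]; [|destruct (Req_dec z b) as [->|Hzb]].
  - destruct (filterlim_at_right_eps e a la Hla eps Heps) as [d [Hd Hclose]].
    exists (Rmin d (b - a)). split; [apply Rmin_glb_lt; lra|].
    intros y Hy. pose proof (Rmin_l d (b - a)). pose proof (Rmin_r d (b - a)).
    apply Rabs_def2 in Hy. unfold ext at 2. destruct (Rle_dec a a); [|lra].
    destruct (Rle_dec y a).
    + unfold ext. destruct (Rle_dec y a); [|lra]. rewrite Rminus_diag, Rabs_R0. exact Heps.
    + rewrite Hext by lra. apply Hclose. lra.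
  - destruct (filterlim_at_left_eps e b lb Hlb eps Heps) as [d [Hd Hclose]].
    exists (Rmin d (b - a)). split; [apply Rmin_glb_lt; lra|].
    intros y Hy. pose proof (Rmin_l d (b - a)). pose proof (Rmin_r d (b - a)).
    apply Rabs_def2 in Hy. unfold ext at 2. destruct (Rle_dec b a); [lra|].
    destruct (Rle_dec b b); [|lra]. destruct (Rle_dec b y).
    + unfold ext. destruct (Rle_dec y a); [lra|]. destruct (Rle_dec b y); [|lra].
      rewrite Rminus_diag, Rabs_R0. exact Heps.
    + rewrite Hext by lra. apply Hclose. lra.
  - destruct (proj1 (continuity_pt_eps e z)
      (proj2 (continuity_pt_filterlim e z) (Hcont z ltac:(lra))) eps Heps) as [d [Hd Hclose]].
    exists (Rmin d (Rmin (z - a) (b - z))). split; [repeat apply Rmin_glb_lt; lra|].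
    intros y Hy. pose proof (Rmin_l d (Rmin (z - a) (b - z))).
    pose proof (Rmin_r d (Rmin (z - a) (b - z))).
    pose proof (Rmin_l (z - a) (b - z)). pose proof (Rmin_r (z - a) (b - z)).
    pose proof Hy as Hy'. apply Rabs_def2 in Hy'.
    rewrite !Hext by lra. apply Hclose. lra.
Qed.

Lemma ex_RInt_piecewise_cont_on_dom t0 tau eta t :
  piecewise_cont_on_dom t0 tau eta -> in_dom t0 tau t -> ex_RInt eta t0 t.
Proof.
  intros Hpc Ht. destruct (Hpc t Ht) as [n [p [Hp0 [Hpn [Hinc Hpieces]]]]].
  rewrite <- Hp0, <- Hpn.
  assert (Hupto : forall k, (k <= n)%nat -> ex_RInt eta (p 0%nat) (p k)).
  { induction k as [|k IHk]; intros Hk; [apply ex_RInt_point|].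
    apply (ex_RInt_Chasles eta _ (p k)); [apply IHk; lia|].
    destruct (Hpieces k ltac:(lia)) as [Hc [Hl Hr]].
    apply ex_RInt_piece; auto. }
  apply Hupto. lia.
Qed.

(** * The comparison flow and its KL function *)

Section Flow.

Variable theta : R -> R.
Hypothesis theta_P : classP theta.

Lemma classP_nonneg x : 0 <= x -> 0 <= theta x.
Proof.
  destruct theta_P as [_ [H0 Hpos]]. intros Hx.
  destruct (Req_dec x 0) as [->|Hx0]; [lra|]. apply Rlt_le, Hpos. lra.
Qed.

(* Extending [theta] evenly makes it continuous on all of [R]. *)
Definition theta_abs (x : R) : R := theta (Rabs x).

Lemma theta_abs_continuous x : continuity_pt theta_abs x.
Proof.
  apply continuity_pt_eps. intros eps Heps.
  destruct theta_P as [Hc _].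
  destruct (Hc (Rabs x) (Rabs_pos x) eps Heps) as [d [Hd Hclose]].
  exists d. split; [exact Hd|]. intros y Hy. apply Hclose; [apply Rabs_pos|].
  eapply Rle_lt_trans; [apply Rabs_triang_inv2|exact Hy].
Qed.

Definition argmin_theta (s : R) : R :=
  epsilon (inhabits 1) (fun y => 1 <= y <= 2 /\
    forall z, 1 <= z <= 2 -> theta_abs (s * y) <= theta_abs (s * z)).

(* For [s > 0], the minimum of [theta] over [[s, 2 s]]. *)
Definition min_theta (s : R) : R := theta_abs (s * argmin_theta s).

Lemma argmin_theta_spec s : 1 <= argmin_theta s <= 2 /\
  forall z, 1 <= z <= 2 -> min_theta s <= theta_abs (s * z).
Proof.
  unfold min_theta, argmin_theta. apply epsilon_spec.
  destruct (continuity_ab_min (fun y => theta_abs (s * y)) 1 2) as [y [Hmin Hy]];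
    [lra| |exists y; auto].
  intros c _. apply continuity_pt_filterlim.
  apply (continuous_comp (fun y => s * y) theta_abs).
  - apply (continuous_mult (fun _ => s) (fun y => y));
      [apply continuous_const|apply continuous_id].
  - apply continuity_pt_filterlim, theta_abs_continuous.
Qed.

Lemma min_theta_continuous s0 : continuity_pt min_theta s0.
Proof.
  apply continuity_pt_eps. intros eps Heps.
  set (K := 2 * Rabs s0 + 2).
  destruct (Heine theta_abs (fun z => - K <= z <= K) (compact_P3 (- K) K)
    (fun z _ => theta_abs_continuous z) (mkposreal eps Heps)) as [[d Hd] Hunif].
  simpl in Hunif.
  exists (Rmin 1 (d / 2)). split; [apply Rmin_glb_lt; lra|].
  intros s Hs. pose proof (Rmin_l 1 (d / 2)). pose proof (Rmin_r 1 (d / 2)).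
  pose proof (Rle_abs s0). pose proof (Rle_abs (- s0)). rewrite Rabs_Ropp in *.
  assert (Hclose : forall y, 1 <= y <= 2 ->
    Rabs (theta_abs (s * y) - theta_abs (s0 * y)) < eps).
  { intros y Hy. pose proof (Rabs_def2 _ _ Hs). apply Hunif; unfold K; try nra.
    replace (s * y - s0 * y) with ((s - s0) * y) by ring.
    rewrite Rabs_mult, (Rabs_right y) by lra. nra. }
  destruct (argmin_theta_spec s) as [Hy Hmin].
  destruct (argmin_theta_spec s0) as [Hy0 Hmin0].
  pose proof (Rabs_def2 _ _ (Hclose _ Hy)). pose proof (Rabs_def2 _ _ (Hclose _ Hy0)).
  pose proof (Hmin _ Hy0). pose proof (Hmin0 _ Hy).
  unfold min_theta in *. apply Rabs_def1; lra.
Qed.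

Definition rho (s : R) : R := Rmin s (min_theta s).

Lemma rho_pos s : 0 < s -> 0 < rho s.
Proof.
  intros Hs. destruct (argmin_theta_spec s) as [Hy _]. destruct theta_P as [_ [_ Hpos]].
  apply Rmin_glb_lt; [exact Hs|]. apply Hpos.
  rewrite Rabs_right; [|apply Rle_ge]; nra.
Qed.

Lemma rho_le_id s : rho s <= s.
Proof. apply Rmin_l. Qed.

Lemma rho_le_theta s z : 0 < s -> s <= z <= 2 * s -> rho s <= theta z.
Proof.
  intros Hs Hz. destruct (argmin_theta_spec s) as [_ Hmin].
  eapply Rle_trans; [apply Rmin_r|].
  specialize (Hmin (z / s)). unfold theta_abs in Hmin.
  replace (s * (z / s)) with z in Hmin by (field; lra).
  rewrite Rabs_right in Hmin by lra. apply Hmin.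
  split; [apply Rmult_le_reg_r with s|apply Rmult_le_reg_r with s]; try field_simplify; lra.
Qed.

Lemma rho_continuous s : continuity_pt rho s.
Proof.
  apply continuity_pt_eps. intros eps Heps.
  destruct (proj1 (continuity_pt_eps _ _) (min_theta_continuous s) eps Heps)
    as [d [Hd Hclose]].
  exists (Rmin d eps). split; [now apply Rmin_glb_lt|].
  intros y Hy. pose proof (Rmin_l d eps). pose proof (Rmin_r d eps).
  specialize (Hclose y ltac:(lra)). apply Rabs_def2 in Hclose. apply Rabs_def2 in Hy.
  unfold rho, Rmin. destruct (Rle_dec y _), (Rle_dec s _); apply Rabs_def1; lra.
Qed.

Lemma inv_rho_continuous s : 0 < s -> continuous (fun x => / rho x) s.
Proof.
  intros Hs. apply continuity_pt_filterlim, continuity_pt_inv.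
  - apply rho_continuous.
  - apply Rgt_not_eq, rho_pos, Hs.
Qed.

Lemma ex_RInt_inv_rho a b : 0 < a -> 0 < b -> ex_RInt (fun x => / rho x) a b.
Proof.
  intros Ha Hb. apply (ex_RInt_continuous (V := R_CompleteNormedModule)).
  intros z Hz. apply inv_rho_continuous.
  eapply Rlt_le_trans; [|apply Hz]. now apply Rmin_glb_lt.
Qed.

(* [G] is an antiderivative of [- 1 / rho]; [G (beta r t) = G r + t] below
   makes [beta] the flow of [v' = - rho v]. *)
Definition G (s : R) : R := RInt (fun x => / rho x) s 1.

Lemma G_increment x y : 0 < x -> 0 < y -> G y - G x = RInt (fun z => / rho z) y x.
Proof.
  intros Hx Hy. unfold G.
  rewrite <- (RInt_Chasles _ y x 1) by (apply ex_RInt_inv_rho; lra).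
  unfold plus; simpl. ring.
Qed.

Lemma G_decrease_ge y x c : 0 < y -> y < x ->
  (forall z, y < z < x -> c <= / rho z) -> (x - y) * c <= G y - G x.
Proof.
  intros Hy Hyx Hc. rewrite G_increment by lra.
  replace ((x - y) * c) with (RInt (fun _ => c) y x) by (rewrite RInt_const; reflexivity).
  apply RInt_le; [lra|apply ex_RInt_const|apply ex_RInt_inv_rho; lra|exact Hc].
Qed.

Lemma G_lt y x : 0 < y -> y < x -> G x < G y.
Proof.
  intros Hy Hyx.
  assert (0 < RInt (fun z => / rho z) y x).
  { apply RInt_gt_0; [exact Hyx| |].
    - intros z Hz. apply Rinv_0_lt_compat, rho_pos. lra.
    - intros z Hz. apply inv_rho_continuous. lra. }
  rewrite <- G_increment in H; lra.
Qed.

Lemma G_le y x : 0 < y -> y <= x -> G x <= G y.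
Proof.
  intros Hy Hyx. destruct (Req_dec y x) as [->|]; [lra|]. apply Rlt_le, G_lt; lra.
Qed.

Lemma G_continuous s : 0 < s -> continuity_pt G s.
Proof.
  intros Hs. apply continuity_pt_filterlim, (@ex_derive_continuous R_AbsRing R_NormedModule).
  exists (opp (/ rho s)). apply (is_derive_RInt' (fun x => / rho x) G s 1).
  - assert (Hs2 : 0 < s / 2) by lra. exists (mkposreal _ Hs2). intros a Ha.
    change (Rabs (a - s) < s / 2) in Ha. apply Rabs_def2 in Ha.
    apply (RInt_correct (V := R_CompleteNormedModule)), ex_RInt_inv_rho; lra.
  - apply inv_rho_continuous, Hs.
Qed.

(* Because [rho s <= s], the integrand dominates [1 / z]. *)
Lemma G_half s : 0 < s -> G s + / 2 <= G (s / 2).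
Proof.
  intros Hs.
  assert (Hdec : (s - s / 2) * / s <= G (s / 2) - G s).
  { apply G_decrease_ge; try lra. intros z Hz.
    apply Rle_trans with (/ z); [apply Rinv_le_contravar; lra|].
    apply Rinv_le_contravar; [apply rho_pos; lra|apply rho_le_id]. }
  replace ((s - s / 2) * / s) with (/ 2) in Hdec by (field; lra). lra.
Qed.

Lemma G_pow2 n : G (2 ^ n) + INR n / 2 <= G 1 <= G (/ 2 ^ n) - INR n / 2.
Proof.
  induction n as [|n IHn]; [simpl; rewrite Rinv_1; lra|].
  rewrite S_INR. assert (H2n : 0 < 2 ^ n) by (apply pow_lt; lra).
  pose proof (G_half (2 * 2 ^ n) ltac:(lra)) as Hup.
  pose proof (G_half (/ 2 ^ n) ltac:(apply Rinv_0_lt_compat; lra)) as Hdown.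
  replace (2 * 2 ^ n / 2) with (2 ^ n) in Hup by field.
  replace (/ 2 ^ n / 2) with (/ (2 * 2 ^ n)) in Hdown by (field; lra).
  change (2 ^ S n) with (2 * 2 ^ n). lra.
Qed.

Lemma G_surjective y : exists s, 0 < s /\ G s = y.
Proof.
  destruct (INR_unbounded (2 * Rabs (y - G 1))) as [n Hn].
  assert (Hup : 2 <= 2 ^ S n) by (simpl; pose proof (pow_R1_Rle 2 n); lra).
  assert (Hdown : 0 < / 2 ^ S n <= / 2) by
    (split; [apply Rinv_0_lt_compat|apply Rinv_le_contravar]; lra).
  pose proof (G_pow2 (S n)). rewrite S_INR in *.
  pose proof (Rle_abs (y - G 1)). pose proof (Rle_abs (- (y - G 1))).
  rewrite Rabs_Ropp in *.
  assert (Hcont : forall x, 0 < x -> continuity_pt (fun s => - G s) x)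
    by (intros x Hx; apply (continuity_pt_opp G), G_continuous, Hx).
  destruct (IVT_Rbar_incr (fun s => - G s) (/ 2 ^ S n) (2 ^ S n)
    (- G (/ 2 ^ S n)) (- G (2 ^ S n)) (- y)) as [s [Hs1 [Hs2 Hs]]].
  - apply (is_lim_continuity (fun s => - G s)), Hcont. lra.
  - apply (is_lim_continuity (fun s => - G s)), Hcont. lra.
  - intros x Hx _. apply Hcont. cbn [Rbar_lt] in Hx. lra.
  - cbn [Rbar_lt]. lra.
  - cbn [Rbar_lt]. split; lra.
  - exists s. cbn [Rbar_lt] in Hs1. split; lra.
Qed.

Definition Ginv (y : R) : R := epsilon (inhabits 1) (fun s => 0 < s /\ G s = y).

Lemma Ginv_spec y : 0 < Ginv y /\ G (Ginv y) = y.
Proof. exact (epsilon_spec (inhabits 1) _ (G_surjective y)). Qed.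

Lemma Ginv_G s : 0 < s -> Ginv (G s) = s.
Proof.
  intros Hs. destruct (Ginv_spec (G s)) as [Hpos HG].
  destruct (Rtotal_order (Ginv (G s)) s) as [Hlt|[Heq|Hlt]]; [|exact Heq|];
    [pose proof (G_lt _ _ Hpos Hlt)|pose proof (G_lt _ _ Hs Hlt)]; lra.
Qed.

Lemma Ginv_lt y1 y2 : y1 < y2 -> Ginv y2 < Ginv y1.
Proof.
  intros Hy. destruct (Ginv_spec y1) as [H1 HG1]. destruct (Ginv_spec y2) as [H2 HG2].
  apply Rnot_le_lt. intro Hle. pose proof (G_le _ _ H1 Hle). lra.
Qed.

Lemma Ginv_le y1 y2 : y1 <= y2 -> Ginv y2 <= Ginv y1.
Proof.
  intros Hy. destruct (Req_dec y1 y2) as [->|]; [lra|]. apply Rlt_le, Ginv_lt. lra.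
Qed.

Lemma Ginv_continuous y0 : continuity_pt Ginv y0.
Proof.
  apply continuity_pt_eps. intros eps Heps.
  destruct (Ginv_spec y0) as [Hs0 HG0]. set (s0 := Ginv y0) in *.
  set (e := Rmin eps (s0 / 2)).
  assert (e <= eps) by apply Rmin_l. assert (e <= s0 / 2) by apply Rmin_r.
  assert (He : 0 < e) by (apply Rmin_glb_lt; lra).
  pose proof (G_lt (s0 - e) s0 ltac:(lra) ltac:(lra)).
  pose proof (G_lt s0 (s0 + e) ltac:(lra) ltac:(lra)).
  exists (Rmin (G (s0 - e) - y0) (y0 - G (s0 + e))). split; [apply Rmin_glb_lt; lra|].
  intros y Hy. apply Rabs_def2 in Hy.
  pose proof (Rmin_l (G (s0 - e) - y0) (y0 - G (s0 + e))).
  pose proof (Rmin_r (G (s0 - e) - y0) (y0 - G (s0 + e))).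
  pose proof (Ginv_lt y (G (s0 - e)) ltac:(lra)).
  pose proof (Ginv_lt (G (s0 + e)) y ltac:(lra)).
  rewrite !Ginv_G in * by lra. apply Rabs_def1; lra.
Qed.

Definition beta (r t : R) : R := if Rlt_dec 0 r then Ginv (G r + t) else 0.

Lemma beta_pos r t : 0 < r -> beta r t = Ginv (G r + t).
Proof. intros Hr. unfold beta. destruct (Rlt_dec 0 r); [reflexivity|lra]. Qed.

Lemma beta_nonpos r t : ~ 0 < r -> beta r t = 0.
Proof. intros Hr. unfold beta. destruct (Rlt_dec 0 r); [lra|reflexivity]. Qed.

Lemma beta_ge0 r t : 0 <= beta r t.
Proof.
  destruct (Rlt_dec 0 r) as [Hr|Hr].
  - rewrite beta_pos by exact Hr. apply Rlt_le, Ginv_spec.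
  - rewrite beta_nonpos by exact Hr. lra.
Qed.

Lemma beta_le r t : 0 < r -> 0 <= t -> beta r t <= r.
Proof.
  intros Hr Ht. rewrite beta_pos by exact Hr.
  rewrite <- (Ginv_G r Hr) at 2. apply Ginv_le. lra.
Qed.

Lemma beta_continuous r t : 0 <= r -> forall eps, 0 < eps -> exists d, 0 < d /\
  forall r' t', 0 <= r' -> 0 <= t' -> Rabs (r' - r) < d -> Rabs (t' - t) < d ->
    Rabs (beta r' t' - beta r t) < eps.
Proof.
  intros Hr eps Heps. destruct (Rlt_dec 0 r) as [Hr0|Hr0].
  - destruct (proj1 (continuity_pt_eps _ _) (Ginv_continuous (G r + t)) eps Heps)
      as [d1 [Hd1 HGinv]].
    destruct (proj1 (continuity_pt_eps _ _) (G_continuous r Hr0) (d1 / 2) ltac:(lra))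
      as [d2 [Hd2 HG]].
    set (d := Rmin (r / 2) (Rmin d2 (d1 / 2))).
    assert (d <= r / 2) by apply Rmin_l.
    assert (d <= d2) by (eapply Rle_trans; [apply Rmin_r|apply Rmin_l]).
    assert (d <= d1 / 2) by (eapply Rle_trans; [apply Rmin_r|apply Rmin_r]).
    exists d. split; [repeat apply Rmin_glb_lt; lra|].
    intros r' t' Hr' Ht' Hrr Htt.
    specialize (HG r' ltac:(lra)). apply Rabs_def2 in Hrr.
    rewrite !beta_pos by lra. apply HGinv.
    apply Rabs_def2 in HG. apply Rabs_def2 in Htt. apply Rabs_def1; lra.
  - replace r with 0 in * by lra. rewrite beta_nonpos by lra.
    exists eps. split; [exact Heps|]. intros r' t' Hr' Ht' Hrr _.
    rewrite Rminus_0_r in *. pose proof (beta_ge0 r' t').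
    destruct (Rlt_dec 0 r') as [Hp|Hp].
    + pose proof (beta_le r' t' Hp Ht'). rewrite Rabs_right in * by lra. lra.
    + rewrite beta_nonpos by exact Hp. rewrite Rabs_R0. exact Heps.
Qed.

Lemma beta_KL : classKL beta.
Proof.
  split; [|split].
  - intros r t Hr _. now apply beta_continuous.
  - intros t Ht. split; [split; [|split]|].
    + intros r Hr eps Heps. destruct (beta_continuous r t Hr eps Heps) as [d [Hd Hclose]].
      exists d. split; [exact Hd|]. intros s Hs Hsr. apply Hclose; auto.
      rewrite Rminus_diag, Rabs_R0. exact Hd.
    + apply beta_nonpos. lra.
    + intros r Hr. rewrite beta_pos by exact Hr. apply Ginv_spec.
    + intros r s Hr Hrs. rewrite (beta_pos s) by lra.
      destruct (Rlt_dec 0 r) as [Hr0|Hr0].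
      * rewrite beta_pos by exact Hr0. apply Ginv_lt.
        pose proof (G_lt r s Hr0 Hrs). lra.
      * rewrite beta_nonpos by exact Hr0. apply Ginv_spec.
  - intros r Hr. split; [|split; [|split]].
    + intros t Ht eps Heps.
      destruct (beta_continuous r t (Rlt_le _ _ Hr) eps Heps) as [d [Hd Hclose]].
      exists d. split; [exact Hd|]. intros s Hs Hst. apply Hclose; auto; [lra|].
      rewrite Rminus_diag, Rabs_R0. exact Hd.
    + intros t _. apply beta_ge0.
    + intros t s _ Hts. rewrite !beta_pos by exact Hr. apply Ginv_lt. lra.
    + apply filterlim_locally. intros eps.
      exists (G eps - G r). intros t Ht. apply ball_R.
      rewrite beta_pos by exact Hr. destruct (Ginv_spec (G r + t)) as [Hpos _].
      pose proof (Ginv_lt (G eps) (G r + t) ltac:(lra)).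
      rewrite Ginv_G in * by apply cond_pos.
      rewrite Rminus_0_r, Rabs_right; lra.
Qed.

Lemma G_local_slope v : 0 < v -> forall e, 0 < e -> exists d, 0 < d /\
  forall y, v - d < y < v -> (v - y) * (/ rho v - e) <= G y - G v.
Proof.
  intros Hv e He.
  destruct (proj1 (continuity_pt_eps _ _)
    (proj2 (continuity_pt_filterlim _ _) (inv_rho_continuous v Hv)) e He) as [d [Hd Hclose]].
  exists (Rmin d (v / 2)). split; [apply Rmin_glb_lt; lra|].
  intros y Hy. pose proof (Rmin_l d (v / 2)). pose proof (Rmin_r d (v / 2)).
  apply G_decrease_ge; [lra|lra|]. intros z Hz.
  specialize (Hclose z ltac:(apply Rabs_def1; lra)). apply Rabs_def2 in Hclose. lra.
Qed.

(* Chain rule for the upper right Dini derivative through the decreasing [G]: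
   if [D^+ u <= - rho u] then [D^+ (id - G o u) <= 0]. *)
Lemma right_slope_le_G_comp u a b x :
  continuous_on_segment u a b -> a <= x < b -> 0 < u x ->
  right_slope_le u b x (- rho (u x)) ->
  right_slope_le (fun y => y - G (u y)) b x 0.
Proof.
  intros Hu Hx Hux Hslope e He.
  set (v := u x) in *. set (p := rho v). set (e' := Rmin e 1).
  assert (e' <= e) by apply Rmin_l. assert (e' <= 1) by apply Rmin_r.
  assert (He' : 0 < e') by (apply Rmin_glb_lt; lra).
  assert (Hp : 0 < p) by (apply rho_pos, Hux).
  destruct (Hslope (e' * p / 2) ltac:(apply Rdiv_lt_0_compat; nra)) as [d1 [Hd1 Hu1]].
  destruct (G_local_slope v Hux (e' / (2 * p)) ltac:(apply Rdiv_lt_0_compat; lra))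
    as [d2 [Hd2 HG]].
  destruct (Hu x ltac:(lra) d2 Hd2) as [d3 [Hd3 Hu3]].
  exists (Rmin d1 d3). split; [now apply Rmin_glb_lt|].
  intros h Hh Hxh. pose proof (Rmin_l d1 d3). pose proof (Rmin_r d1 d3).
  assert (Hdrop : (p - e' * p / 2) * h <= v - u (x + h))
    by (specialize (Hu1 h ltac:(lra) Hxh); fold v p in Hu1; lra).
  assert (Hnear : v - d2 < u (x + h)).
  { specialize (Hu3 (x + h) ltac:(lra) ltac:(rewrite Rabs_right; lra)).
    apply Rabs_def2 in Hu3. fold v in Hu3. lra. }
  assert (Hrate : 0 <= / p - e' / (2 * p)).
  { replace (/ p - e' / (2 * p)) with ((1 - e' / 2) / p) by (field; lra).
    apply Rlt_le, Rdiv_lt_0_compat; lra. }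
  assert (Hgain : (1 - e' / 2) * (1 - e' / 2) * h <= G (u (x + h)) - G v).
  { replace ((1 - e' / 2) * (1 - e' / 2) * h)
      with ((p - e' * p / 2) * h * (/ p - e' / (2 * p))) by (field; lra).
    eapply Rle_trans; [apply Rmult_le_compat_r; [exact Hrate|exact Hdrop]|].
    assert (0 < (p - e' * p / 2) * h) by (apply Rmult_lt_0_compat; nra).
    apply HG. lra. }
  fold v. nra.
Qed.

Lemma G_comparison u a b :
  a <= b -> continuous_on_segment u a b -> (forall x, a <= x <= b -> 0 < u x) ->
  (forall x, a <= x < b -> right_slope_le u b x (- rho (u x))) ->
  G (u a) + (b - a) <= G (u b).
Proof.
  intros Hab Hu Hpos Hslope.
  enough (b - G (u b) <= a - G (u a)) by lra.
  apply (right_slope_le_0_nonincreasing (fun y => y - G (u y))); [exact Hab| |].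
  - apply continuous_on_segment_minus.
    + apply (continuous_on_segment_lipschitz _ a b 1); [lra|]. intros. lra.
    + apply continuous_on_segment_comp; [exact Hu|]. intros x Hx. apply G_continuous, Hpos, Hx.
  - intros x Hx. apply (right_slope_le_G_comp u a b x Hu Hx); [apply Hpos; lra|apply Hslope, Hx].
Qed.

End Flow.

Section Estimate.

Variables (theta om eta : R -> R) (t0 t : R).
Hypotheses (theta_P : classP theta) (t0_le_t : t0 <= t).
Hypotheses (om_cont : continuous_on_segment om t0 t)
  (om_nonneg : forall x, t0 <= x <= t -> 0 <= om x).
Hypotheses (eta_nonneg : forall x, t0 <= x <= t -> 0 <= eta x)
  (eta_int : ex_RInt eta t0 t)
  (eta_right_cont : forall x, t0 <= x < t -> filterlim eta (at_right x) (locally (eta x))).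
Hypothesis om_slope :
  forall x, t0 <= x < t -> right_slope_le om t x (- theta (om x) + eta x).

Lemma excess_continuous :
  continuous_on_segment (fun y => om y - RInt eta t0 y) t0 t.
Proof. apply continuous_on_segment_minus; [exact om_cont|now apply RInt_continuous_on_segment]. Qed.

Lemma excess_slope x : t0 <= x < t ->
  right_slope_le (fun y => om y - RInt eta t0 y) t x (- theta (om x)).
Proof.
  intros Hx. replace (- theta (om x)) with (- theta (om x) + eta x + - eta x) by ring.
  apply right_slope_le_plus; [now apply om_slope|].
  now apply right_slope_le_opp_RInt, eta_right_cont.
Qed.

Lemma estimate_when_touching s :
  t0 <= s <= t -> om s <= 2 * RInt eta t0 s -> om t <= 2 * RInt eta t0 t.
Proof.
  intros Hs Hos.
  assert (Hexcess : om t - RInt eta t0 t <= om s - RInt eta t0 s).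
  { apply (right_slope_le_0_nonincreasing (fun y => om y - RInt eta t0 y)); [lra| |].
    - apply (continuous_on_segment_sub _ t0 t); [lra|lra|exact excess_continuous].
    - intros x Hx. apply (right_slope_le_weaken _ _ _ (- theta (om x))).
      + pose proof (classP_nonneg theta theta_P (om x) (om_nonneg x ltac:(lra))). lra.
      + apply excess_slope. lra. }
  pose proof (RInt_nondecreasing eta t0 t eta_int s t eta_nonneg ltac:(lra) ltac:(lra) ltac:(lra)).
  lra.
Qed.

(* While [om > 2 I], the excess [u = om - I] satisfies [u <= om <= 2 u],
   so [- theta (om) <= - rho (u)] and [u] is dominated by the flow of [- rho]. *)
Lemma estimate_when_away :
  (forall s, t0 <= s <= t -> 2 * RInt eta t0 s < om s) ->
  om t <= beta theta (om t0) (t - t0) + RInt eta t0 t.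
Proof.
  intros Haway. set (u y := om y - RInt eta t0 y).
  assert (HI0 : RInt eta t0 t0 = 0) by apply (RInt_point (V := R_CompleteNormedModule)).
  assert (Hu : forall s, t0 <= s <= t -> 0 < u s /\ u s <= om s <= 2 * u s).
  { intros s Hs. pose proof (Haway s Hs).
    pose proof (RInt_nonneg eta t0 t eta_int s eta_nonneg Hs). unfold u. lra. }
  assert (Hcomp : G theta (u t0) + (t - t0) <= G theta (u t)).
  { apply (G_comparison theta theta_P); [exact t0_le_t|exact excess_continuous|apply Hu|].
    intros x Hx. apply (right_slope_le_weaken _ _ _ (- theta (om x))); [|now apply excess_slope].
    destruct (Hu x ltac:(lra)) as [Hux Hom].
    pose proof (rho_le_theta theta theta_P (u x) (om x) Hux Hom). lra. }
  assert (Hut0 : u t0 = om t0) by (unfold u; rewrite HI0; ring).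
  rewrite Hut0 in Hcomp. destruct (Hu t0 ltac:(lra)) as [Hom0 _]. rewrite Hut0 in Hom0.
  rewrite beta_pos by exact Hom0.
  pose proof (Ginv_le theta theta_P _ _ Hcomp) as Hbeta.
  rewrite (Ginv_G theta theta_P) in Hbeta by (apply Hu; lra). unfold u in Hbeta. lra.
Qed.

Lemma estimate_on_segment : om t <= beta theta (om t0) (t - t0) + 2 * RInt eta t0 t.
Proof.
  pose proof (beta_ge0 theta theta_P (om t0) (t - t0)).
  pose proof (RInt_nonneg eta t0 t eta_int t eta_nonneg ltac:(lra)).
  destruct (classic (exists s, t0 <= s <= t /\ om s <= 2 * RInt eta t0 s))
    as [[s [Hs Hos]]|Hnone].
  - pose proof (estimate_when_touching s Hs Hos). lra.
  - enough (om t <= beta theta (om t0) (t - t0) + RInt eta t0 t) by lra.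
    apply estimate_when_away. intros s Hs. apply Rnot_le_lt. intro Hos.
    apply Hnone. exists s. auto.
Qed.

End Estimate.

Lemma in_dom_segment t0 tau t x : in_dom t0 tau t -> t0 <= x <= t -> in_dom t0 tau x.
Proof.
  intros [Ht0 Htau] Hx. split; [lra|].
  eapply Rbar_le_lt_trans; [|exact Htau]. simpl. lra.
Qed.

Lemma cont_on_dom_segment t0 tau w t :
  cont_on_dom t0 tau w -> in_dom t0 tau t -> continuous_on_segment w t0 t.
Proof.
  intros Hw Ht x Hx eps Heps.
  destruct (Hw x (in_dom_segment t0 tau t x Ht Hx) eps Heps) as [d [Hd Hclose]].
  exists d. split; [exact Hd|]. intros y Hy. apply Hclose, (in_dom_segment t0 tau t); assumption.
Qed.

Theorem mainTheorem2 :
  forall theta : R -> R, classP theta ->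
  exists beta : R -> R -> R, classKL beta /\
  forall (t0 : R) (tau : Rbar) (omega eta : R -> R),
    0 <= t0 -> Rbar_lt (Finite 0) tau ->
    cont_on_dom t0 tau omega ->
    (forall t, in_dom t0 tau t -> 0 <= omega t) ->
    (forall t, in_dom t0 tau t -> 0 <= eta t) ->
    right_cont_on_dom t0 tau eta ->
    piecewise_cont_on_dom t0 tau eta ->
    (forall t, in_dom t0 tau t ->
       Rbar_le (dini_upper omega t) (Finite (- theta (omega t) + eta t))) ->
    forall t, in_dom t0 tau t ->
      omega t <= beta (omega t0) (t - t0) + 2 * RInt eta t0 t.
Proof.
  intros theta theta_P. exists (beta theta). split; [exact (beta_KL theta theta_P)|].
  intros t0 tau om eta _ _ Hom Hom_nonneg Heta_nonneg Heta_right Heta_pc Hdini t Ht.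
  assert (Hseg : forall x, t0 <= x <= t -> in_dom t0 tau x)
    by (intros x Hx; exact (in_dom_segment t0 tau t x Ht Hx)).
  apply estimate_on_segment.
  - exact theta_P.
  - destruct Ht; lra.
  - exact (cont_on_dom_segment t0 tau om t Hom Ht).
  - intros x Hx. apply Hom_nonneg, Hseg, Hx.
  - intros x Hx. apply Heta_nonneg, Hseg, Hx.
  - exact (ex_RInt_piecewise_cont_on_dom t0 tau eta t Heta_pc Ht).
  - intros x Hx. apply Heta_right, Hseg. lra.
  - intros x Hx. apply dini_upper_right_slope_le, Hdini, Hseg. lra.
Qed.
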